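(* Let $d\ge 1$ and $n\ge 1$ be integers, let $\vec\alpha_1,\dots,\vec\alpha_n\in\mathbb{T}^d=\mathbb{R}^d/\mathbb{Z}^d$ (viewed as elements of $[0,1)^d$) be arbitrary, and let $Q$ be the probability measure on $\mathbb{T}^d$ assigning mass $\frac{1}{2n}$ to each of the points $+\vec\alpha_i$ and $-\vec\alpha_i$, $i=1,\dots,n$ (counted with multiplicity), i.e. $Q=\frac{1}{2n}\sum_{i=1}^n(\delta_{\vec\alpha_i}+\delta_{-\vec\alpha_i})$. Then for every positive integer $k$, the $k$-th convolution power $Q^{*k}$ satisfies $$D(Q^{*k})\ \ge\ \frac{1}{\pi^d\, 5^{n+1}\, d^{n/2}}\; k^{-n/2}.$$
   Context: $Q^{*k}$ is the $k$-fold convolution of $Q$ on the additive group $\mathbb{T}^d$; it is the distribution after $k$ steps of the random walk started at $\vec 0$ which at each step picks one of the $\vec\alpha_i$ uniformly at random and adds or subtracts it (each with probability $1/2$), coordinates taken mod 1. Let $U$ denote Haar (uniform Lebesgue) measure on $\mathbb{T}^d$. A box in $\mathbb{T}^d$ is a set of the form $[a_1,b_1)\times\cdots\times[a_d,b_d)$ (sides parallel to the axes, interpreted mod 1). The discrepancy of a probability measure $P$ on $\mathbb{T}^d$ is $D(P)=\sup_{B\text{ box}}|P(B)-U(B)|$. *)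

From HB Require Import structures.
From mathcomp Require Import all_boot all_order all_algebra.
From mathcomp Require Import all_classical all_reals all_analysis.
Set Implicit Arguments. Unset Strict Implicit. Unset Printing Implicit Defensive.
Import Order.TTheory GRing.Theory Num.Theory.
Local Open Scope ring_scope.
Local Open Scope classical_set_scope.

Definition frac {R : realType} (x : R) : R := x - (Num.floor x)%:~R.

(* Box in T^d with "lower corner" a and side lengths l (0 <= l j <= 1):
   the set of x with x_j in [a_j, a_j + l_j) mod 1 for every j. *)
Definition in_box {R : realType} (d : nat) (a l : 'I_d -> R) (x : 'I_d -> R) : bool :=
  [forall j, frac (x j - a j) < l j].

Definition is_box_len {R : realType} (d : nat) (l : 'I_d -> R) : Prop :=
  forall j, 0 <= l j <= 1.

Definition box_vol {R : realType} (d : nat) (l : 'I_d -> R) : R := \prod_(j < d) l j.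

Definition walk_pos {R : realType} (d n k : nat) (alpha : 'I_n -> 'I_d -> R)
  (w : {ffun 'I_k -> 'I_n * bool}) : 'I_d -> R :=
  fun j => \sum_(t < k) (if (w t).2 then alpha (w t).1 j else - alpha (w t).1 j).

(* Q^{*k}(B): the k steps choose (i, sign) uniformly among 2n possibilities,
   independently; so Q^{*k}(B) = #{walks ending in B} / (2n)^k. *)
Definition convpow_box {R : realType} (d n k : nat) (alpha : 'I_n -> 'I_d -> R)
  (a l : 'I_d -> R) : R :=
  (#|[set w : {ffun 'I_k -> 'I_n * bool} | in_box a l (walk_pos alpha w)]|)%:R
  / ((2 * n) ^ k)%:R.

Definition discrepancy_convpow {R : realType} (d n k : nat) (alpha : 'I_n -> 'I_d -> R) : R :=
  sup [set r : R | exists a l : 'I_d -> R,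
         is_box_len l /\ r = `| @convpow_box R d n k alpha a l - box_vol l |].

From Pilot Require Import Defs.
From Stdlib Require Import PeanoNat.
From HB Require Import structures.
From mathcomp Require Import all_boot all_order all_algebra.
From mathcomp Require Import all_classical all_reals all_analysis.
From mathcomp Require Import zify ring lra.
Set Implicit Arguments.
Unset Strict Implicit.
Unset Printing Implicit Defensive.
Import Order.TTheory GRing.Theory Num.Theory.
Local Open Scope ring_scope.

(* The endpoint of a walk depends only on its vector c in Z^n of net step
   counts. The steps are orthogonal on average (flipping the sign of one step is
   a measure-preserving involution), so the mean of |c|^2 over all walks is k;
   by Markov at least half the walks have |c_i| <= sqrt(2k) for every i, and by
   pigeonhole one count vector is shared by a fraction 1/(2 (4 sqrt k)^n) of
   all walks. A cube of side B at their common endpoint then has mass at least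
   2B but volume at most B. *)

Lemma card_gt_mul_le_sum (T : finType) (f : T -> nat) (c : nat) :
  (#|[set x | (c < f x)%N]| * c.+1 <= \sum_x f x)%N.
Proof.
rewrite -sum_nat_const [X in (_ <= X)%N](bigID (mem [set x | (c < f x)%N])) /=.
apply: leq_trans (leq_addr _ _); apply: leq_sum => x.
by rewrite inE.
Qed.

Lemma exists_large_fiber (T U : finType) (A : {set T}) (f : T -> U) (u0 : U) :
  exists u, (#|A| <= #|U| * #|[set x in A | f x == u]|)%N.
Proof.
pose fiber u := #|[set x in A | f x == u]|.
exists [arg max_(u > u0) fiber u].
have card_A : #|A| = (\sum_u fiber u)%N.
  rewrite -sum1_card (partition_big f xpredT) //=.
  by apply: eq_bigr => u _; rewrite /fiber -sum1_card; apply: eq_bigl => x; rewrite !inE.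
rewrite card_A -sum_nat_const; apply: leq_sum => u _.
by case: arg_maxnP => // v _; apply.
Qed.

Local Notation walk n k := {ffun 'I_k -> 'I_n * bool}.

Section NetCounts.

Variables n k : nat.

Local Notation walk := (walk n k).

Definition step_coord (s : 'I_n * bool) (i : 'I_n) : int :=
  if s.1 == i then (if s.2 then 1 else -1) else 0.

Definition net_count (w : walk) (i : 'I_n) : int := \sum_(t < k) step_coord (w t) i.

Lemma card_walk : #|walk| = ((2 * n) ^ k)%N.
Proof. by rewrite card_ffun card_prod card_bool !card_ord mulnC. Qed.

Lemma sum_step_coord_sqr (s : 'I_n * bool) :
  \sum_(i < n) step_coord s i * step_coord s i = 1.
Proof.
case: s => i0 b; rewrite (bigD1 i0) //= big1 ?addr0.
  by rewrite /step_coord eqxx; case: b.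
by move=> i /negbTE; rewrite /step_coord eq_sym /= => ->; rewrite mul0r.
Qed.

Lemma step_coord_flip (s : 'I_n * bool) i : step_coord (s.1, ~~ s.2) i = - step_coord s i.
Proof. by rewrite /step_coord; case: s => i0 [] /=; case: eqP; rewrite ?oppr0 ?opprK. Qed.

Definition flip_step (t : 'I_k) (w : walk) : walk :=
  [ffun u => if u == t then ((w u).1, ~~ (w u).2) else w u].

Lemma flip_stepK t : involutive (flip_step t).
Proof.
move=> w; apply/ffunP => u; rewrite !ffunE; case: eqP => [->|] //=.
by rewrite negbK; case: (w t).
Qed.

Lemma sum_step_coord_cross (t t' : 'I_k) : t != t' ->
  \sum_(w : walk) \sum_(i < n) step_coord (w t) i * step_coord (w t') i = 0.
Proof.
move=> neq_tt'; set X := \sum_(w : walk) _.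
suff : X = - X by lia.
(* flipping step t negates every summand *)
rewrite {1}/X (reindex_inj (inv_inj (flip_stepK t))) -sumrN.
apply: eq_bigr => w _; rewrite -sumrN; apply: eq_bigr => i _.
by rewrite !ffunE eqxx eq_sym (negbTE neq_tt') step_coord_flip mulNr.
Qed.

Lemma sum_net_count_sqr :
  \sum_(w : walk) \sum_(i < n) net_count w i ^+ 2 = (k * #|walk|)%:R.
Proof.
transitivity (\sum_(t < k) \sum_(t' < k) \sum_(w : walk)
                \sum_(i < n) step_coord (w t) i * step_coord (w t') i).
  have sqr_expand w i : net_count w i ^+ 2 =
      \sum_(t < k) \sum_(t' < k) step_coord (w t) i * step_coord (w t') i.
    by rewrite expr2 mulr_suml; apply: eq_bigr => t _; rewrite mulr_sumr.
  under eq_bigr => w _.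
    rewrite (eq_bigr _ (fun i _ => sqr_expand w i)) exchange_big /=.
    under eq_bigr => t _ do rewrite exchange_big.
    over.
  by rewrite exchange_big; apply: eq_bigr => t _; rewrite exchange_big.
under eq_bigr => t _.
  rewrite (bigD1 t) //= [X in _ + X]big1 => [|t' neq_t't]; last first.
    by apply: sum_step_coord_cross; rewrite eq_sym.
  rewrite addr0; under eq_bigr do rewrite sum_step_coord_sqr.
  over.
by rewrite sumr_const card_ord sumr_const -mulrnA mulnC.
Qed.

Definition net_sqnorm (w : walk) : nat := (\sum_(i < n) `|net_count w i| ^ 2)%N.

Lemma sum_net_sqnorm : (\sum_(w : walk) net_sqnorm w)%N = (k * #|walk|)%N.
Proof.
apply/eqP; rewrite -(eqr_nat int) -sum_net_count_sqr natr_sum; apply/eqP.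
apply: eq_bigr => w _; rewrite natr_sum; apply: eq_bigr => i _.
by rewrite natrX natr_absz intz real_normK ?num_real.
Qed.

Definition short_walks := [set w : walk | (net_sqnorm w <= 2 * k)%N].

Lemma card_short_walks : (#|walk| <= 2 * #|short_walks|)%N.
Proof.
have markov := card_gt_mul_le_sum net_sqnorm (2 * k).
rewrite sum_net_sqnorm in markov.
have long_walks : [set w | 2 * k < net_sqnorm w]%N = ~: short_walks.
  by apply/setP => w; rewrite !inE ltnNge.
rewrite long_walks -(cardsC short_walks) in markov.
have long_le_short : (#|~: short_walks| <= #|short_walks|)%N.
  by rewrite -(leq_pmul2r (ltn0Sn k)); nia.
by rewrite -(cardsC short_walks); lia.
Qed.

Lemma short_walk_net_count_le w i :
  w \in short_walks -> (`|net_count w i| <= Nat.sqrt (2 * k))%N.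
Proof.
rewrite inE => short_w; apply/ssrnat.leP/Nat.sqrt_le_square/ssrnat.leP.
apply: leq_trans short_w; rewrite multE mulnn /net_sqnorm (bigD1 i) //=.
exact: leq_addr.
Qed.

Local Notation M := (Nat.sqrt (2 * k)).

(* Shifts the counts of a short walk into [0, 2M]; [inord] is junk elsewhere. *)
Definition shifted_net_count (w : walk) : {ffun 'I_n -> 'I_(M.*2.+1)} :=
  [ffun i => inord (absz (net_count w i + M%:Z))].

Lemma shifted_net_countK w i : w \in short_walks ->
  (shifted_net_count w i)%:Z - M%:Z = net_count w i.
Proof.
move=> /(short_walk_net_count_le i) le_M; rewrite ffunE inordK; lia.
Qed.

Lemma exists_frequent_net_count : exists c : 'I_n -> int,
  ((2 * n) ^ k <= 2 * M.*2.+1 ^ n *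
     #|[set w : walk | [forall i, net_count w i == c i]]|)%N.
Proof.
have [v many] := exists_large_fiber short_walks shifted_net_count [ffun=> ord0].
exists (fun i => (v i)%:Z - M%:Z).
rewrite -card_walk; apply: leq_trans card_short_walks _.
rewrite card_ffun !card_ord in many.
rewrite -mulnA leq_mul2l /=; apply: leq_trans many _.
rewrite leq_mul2l; apply/orP; right; apply: subset_leq_card.
apply/fintype.subsetP => w; rewrite !inE => /andP[short_w /eqP <-].
by apply/forallP => i; rewrite shifted_net_countK ?inE.
Qed.

End NetCounts.

Section WalkPositions.

Variables (R : realType) (d n k : nat) (alpha : 'I_n -> 'I_d -> R).

Lemma walk_pos_net_count (w : walk n k) j :
  walk_pos alpha w j = \sum_(i < n) (net_count w i)%:~R * alpha i j.
Proof.
rewrite /walk_pos /net_count.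
under [RHS]eq_bigr do rewrite raddf_sum /= mulr_suml.
rewrite [RHS]exchange_big /=; apply: eq_bigr => t _.
rewrite (bigD1 (w t).1) //= big1 ?addr0.
  by rewrite /step_coord eqxx; case: (w t).2; rewrite ?mul1r ?mulN1r.
by move=> i /negbTE; rewrite /step_coord eq_sym => ->; rewrite mul0r.
Qed.

Lemma eq_walk_pos (w w' : walk n k) :
  net_count w =1 net_count w' -> walk_pos alpha w = walk_pos alpha w'.
Proof.
move=> eq_count; apply/funext => j; rewrite !walk_pos_net_count.
by apply: eq_bigr => i _; rewrite eq_count.
Qed.

Lemma convpow_box_ge0 a l : 0 <= convpow_box k alpha a l.
Proof. by rewrite divr_ge0 ?ler0n. Qed.

Lemma convpow_box_le1 a l : convpow_box k alpha a l <= 1.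
Proof.
rewrite /convpow_box; have [->|N_gt0] := posnP ((2 * n) ^ k).
  by rewrite invr0 mulr0.
by rewrite ler_pdivrMr ?ltr0n // mul1r ler_nat -card_walk max_card.
Qed.

Lemma card_le_convpow_box (F : {set walk n k}) p l :
  (forall w, w \in F -> walk_pos alpha w = p) -> (forall j, 0 < l j) ->
  #|F|%:R / ((2 * n) ^ k)%:R <= convpow_box k alpha p l.
Proof.
move=> pos_F l_gt0; rewrite /convpow_box ler_wpM2r ?invr_ge0 ?ler0n // ler_nat.
apply: subset_leq_card; apply/fintype.subsetP => w w_F; rewrite inE /= pos_F //.
by apply/forallP => j; rewrite /Defs.frac subrr floor0 subr0.
Qed.

Lemma le_discrepancy_convpow a l : is_box_len l ->
  `|convpow_box k alpha a l - box_vol l| <= discrepancy_convpow k alpha.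
Proof.
move=> box_l; apply: ub_le_sup; last by exists a, l.
exists 1 => _ [a' [l' [box_l' ->]]].
have vol_ge0 : 0 <= box_vol l' by apply: prodr_ge0 => j _; case/andP: (box_l' j).
have vol_le1 : box_vol l' <= 1 by apply: prodr_ile1 => j _; exact: box_l'.
have mass_ge0 := convpow_box_ge0 a' l'; have mass_le1 := convpow_box_le1 a' l'.
by rewrite ler_norml; apply/andP; split; lra.
Qed.

Lemma cube_discrepancy_ge a (B : R) : (0 < d)%N -> 0 < B ->
  2 * B <= convpow_box k alpha a (fun=> B) -> B <= discrepancy_convpow k alpha.
Proof.
move=> d_gt0 B_gt0 heavy.
have B_le1 : B <= 1 by have := convpow_box_le1 a (fun=> B); lra.
have vol_le : box_vol (fun _ : 'I_d => B) <= B.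
  rewrite /box_vol prodr_const card_ord -(prednK d_gt0) exprS.
  by apply: ler_piMr; [exact: ltW | apply: exprn_ile1 => //; exact: ltW].
have box_B : is_box_len (fun _ : 'I_d => B) by move=> j; rewrite (ltW B_gt0) B_le1.
apply: le_trans (le_discrepancy_convpow a box_B).
by apply: le_trans (ler_norm _); lra.
Qed.

End WalkPositions.

Lemma powR_half_nat (R : realType) (x : R) (m : nat) : 0 <= x ->
  powR x (m%:R / 2) = Num.sqrt x ^+ m.
Proof.
move=> x_ge0; rewrite mulrC powRrM powR12_sqrt // powR_mulrn //; exact: sqrtr_ge0.
Qed.

Lemma sqrtn_double_succ_le (R : realType) (k : nat) : (0 < k)%N ->
  ((Nat.sqrt (2 * k)).*2.+1)%:R <= 4 * Num.sqrt k%:R :> R.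
Proof.
move=> k_gt0; set M := Nat.sqrt _; set s := Num.sqrt k%:R.
have s_ge1 : 1 <= s by rewrite -sqrtr1 ler_sqrt ?ler1n.
have M_sqr : (M%:R : R) ^+ 2 <= 2 * s ^+ 2.
  have /ssrnat.leP := (Nat.sqrt_spec' (2 * k)).1.
  by rewrite sqr_sqrtr ?ler0n // -natrX -natrM ler_nat multE mulnn.
have M_ge0 : 0 <= (M%:R : R) by rewrite ler0n.
rewrite -addn1 -muln2 natrD natrM; nra.
Qed.

Definition frequent_rate (R : realType) (n k : nat) : R :=
  (2 * (4 * Num.sqrt k%:R) ^+ n)^-1.

Lemma frequent_rate_le_mass (R : realType) n k (F : {set walk n k}) :
  (0 < n)%N -> (0 < k)%N ->
  ((2 * n) ^ k <= 2 * (Nat.sqrt (2 * k)).*2.+1 ^ n * #|F|)%N ->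
  frequent_rate R n k <= #|F|%:R / ((2 * n) ^ k)%:R.
Proof.
move=> n_gt0 k_gt0 many; rewrite /frequent_rate.
have N_gt0 : (0 < (2 * n) ^ k)%N by rewrite expn_gt0 muln_gt0 n_gt0.
have s_ge0 : 0 <= Num.sqrt k%:R :> R by exact: sqrtr_ge0.
have Y_gt0 : 0 < 2 * (4 * Num.sqrt k%:R) ^+ n :> R.
  by rewrite mulr_gt0 // exprn_gt0 // mulr_gt0 // sqrtr_gt0 ltr0n.
rewrite ler_pdivlMr ?ltr0n // mulrC ler_pdivrMr //.
apply: le_trans (_ : ((2 * (Nat.sqrt (2 * k)).*2.+1 ^ n * #|F|)%N%:R <= _)).
  by rewrite ler_nat.
rewrite !natrM natrX [_ * (2 * _)]mulrC ler_wpM2r ?ler0n // ler_wpM2l //.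
by rewrite lerXn2r ?nnegrE ?ler0n ?sqrtn_double_succ_le // mulr_ge0.
Qed.

Lemma twice_bound_le_frequent_rate (R : realType) (d n k : nat) :
  (0 < d)%N -> (0 < k)%N ->
  2 * ((pi ^+ d * 5 ^+ n.+1 * powR d%:R (n%:R / 2))^-1 * powR k%:R (- (n%:R / 2)))
    <= frequent_rate R n k.
Proof.
move=> d_gt0 k_gt0.
rewrite /frequent_rate powRN !powR_half_nat ?ler0n // -invfM.
set s := Num.sqrt k%:R; set Z := _ * s ^+ n.
have s_ge1 : 1 <= s by rewrite -sqrtr1 ler_sqrt ?ler1n.
have sd_ge1 : 1 <= Num.sqrt d%:R :> R by rewrite -{1}sqrtr1 ler_sqrt ?ler1n.
have pi_ge1 : 1 <= pi ^+ d :> R.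
  by apply: exprn_ege1; apply: le_trans (pi_ge2 R); rewrite ler1n.
have Z_ge1 : 1 <= Z by rewrite /Z !mulr_ege1 // exprn_ege1 // ler1n.
have Z_gt0 : 0 < Z := lt_le_trans ltr01 Z_ge1.
have -> : 2 * Z^-1 = (Z / 2)^-1 by rewrite invf_div.
have Y_gt0 : 0 < 2 * (4 * s) ^+ n.
  by rewrite mulr_gt0 // exprn_gt0 // mulr_gt0 // (lt_le_trans ltr01 s_ge1).
rewrite lef_pV2 ?posrE ?divr_gt0 // ler_pdivlMr // /Z exprMn.
have sn_ge0 : 0 <= s ^+ n by rewrite exprn_ge0 // (le_trans ler01 s_ge1).
have -> : 2 * (4 ^+ n * s ^+ n) * 2 = 4 ^+ n.+1 * s ^+ n by rewrite exprS; ring.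
rewrite ler_wpM2r //; apply: (@le_trans _ _ (5 ^+ n.+1)).
  by rewrite lerXn2r ?nnegrE ?ler0n // ler_nat.
by rewrite mulrAC ler_peMl ?exprn_ge0 // mulr_ege1 // exprn_ege1.
Qed.

Theorem theorem1 (R : realType) (d n : nat) (alpha : 'I_n -> 'I_d -> R)
  (hd : (1 <= d)%N) (hn : (1 <= n)%N)
  (halpha : forall i j, 0 <= alpha i j < 1)
  (k : nat) (hk : (1 <= k)%N) :
  (pi ^+ d * 5 ^+ n.+1 * powR (d%:R) (n%:R / 2))^-1 * powR (k%:R) (- (n%:R / 2))
    <= @discrepancy_convpow R d n k alpha.
Proof.
have [c many] := exists_frequent_net_count n k.
set F := [set w | _] in many.
have /card_gt0P [w0 w0_F] : (0 < #|F|)%N.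
  rewrite lt0n; apply: contraTneq many => ->.
  by rewrite muln0 -ltnNge expn_gt0 muln_gt0 hn.
have pos_F w : w \in F -> walk_pos alpha w = walk_pos alpha w0.
  move: w0_F; rewrite !inE => /forallP count_w0 /forallP count_w.
  by apply: eq_walk_pos => i; rewrite (eqP (count_w i)) (eqP (count_w0 i)).
set B := (X in X <= _).
have B_gt0 : 0 < B.
  by rewrite /B mulr_gt0 ?invr_gt0 ?mulr_gt0 ?powR_gt0 ?exprn_gt0 ?ltr0n ?pi_gt0.
apply: (@cube_discrepancy_ge _ _ _ _ _ (walk_pos alpha w0) _ hd B_gt0).
apply: le_trans (twice_bound_le_frequent_rate R n hd hk) _.
apply: le_trans (frequent_rate_le_mass R hn hk many) _.
exact: card_le_convpow_box pos_F (fun=> B_gt0).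
Qed.
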